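(* Let $k\ge 1$ and $s\ge 1$ be integers with $s\le k$, and let $t$ be an integer. Then $$k\,\sigma_{k}^{(0)}(t;s)=\sum_{d\mid k}d\,\sigma^{(1)}_{d}(t;s),$$ with the convention $\sigma^{(1)}_{d}(t;s)=0$ if $s>d$. Equivalently, by Möbius inversion, $$k\,\sigma_{k}^{(1)}(t;s)=\sum_{d\mid k}\mu\!\left(\frac{k}{d}\right)d\,\sigma_{d}^{(0)}(t;s),$$ with the analogous convention $\sigma^{(0)}_d(t;s)=0$ if $s>d$.
   Context: For a positive integer $m$, $(q)_m=(1-q)\cdots(1-q^m)$, $(q)_0=1$. For integers $b\ge 0$, $n\ge1$ and $1\le s\le n$, let $R^{(b)}_{n,s}(q)=\sum_{t=0}^{n-1}\sigma^{(b)}_n(t;s)q^t$ be the remainder of $\frac{1}{n^b}(q)_{n-1}^{\,b}(q)_{s-1}$ upon division by $1-q^n$; the values $\sigma^{(b)}_n(t;s)$ are extended to all integers $t$ by $n$-periodicity. $\mu$ is the Möbius function. *)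

From HB Require Import structures.
From mathcomp Require Import all_boot all_order all_algebra.
Set Implicit Arguments. Unset Strict Implicit. Unset Printing Implicit Defensive.
Import Order.TTheory GRing.Theory Num.Theory.
Local Open Scope ring_scope.

Definition qpoch (m : nat) : {poly rat} := \prod_(1 <= j < m.+1) (1 - 'X^j).

Definition Rrem (b n s : nat) : {poly rat} :=
  ((n%:R ^+ b)^-1 *: (qpoch n.-1 ^+ b * qpoch s.-1)) %% (1 - 'X^n).

Definition sigma (b n : nat) (t : int) (s : nat) : rat :=
  (Rrem b n s)`_(`|(t %% n%:Z)%Z|%N).

Definition sigmac (b d : nat) (t : int) (s : nat) : rat :=
  if (s <= d)%N then sigma b d t s else 0.

Definition moebius (n : nat) : int :=
  if n == 0%N then 0
  else if all (fun p => logn p n == 1%N) (primes n) then (-1) ^+ size (primes n)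
  else 0.

From HB Require Import structures.
From mathcomp Require Import all_boot all_order all_algebra algC cyclotomic.
From mathcomp Require Import zify.
Set Implicit Arguments. Unset Strict Implicit. Unset Printing Implicit Defensive.
Import Order.TTheory GRing.Theory Num.Theory.
Local Open Scope ring_scope.

(* Reducing modulo 1 - q^n and reading off the coefficient of q^t is the discrete Fourier
   transform over the n-th roots of unity:
     n sigma^(b)_n(t;s) = sum_(zeta^n = 1) zeta^(-t) n^(-b) (zeta)_(n-1)^b (zeta)_(s-1).
   For b = 0 every root contributes H(zeta) = zeta^(-t) (zeta)_(s-1).  For b = 1 the factor
   (zeta)_(n-1) equals n at primitive n-th roots and vanishes at the others, so
   n sigma^(1)_n(t;s) is the sum of H over the primitive n-th roots.  Sorting the k-th roots of
   unity by their order d | k gives the first identity, and Moebius inversion the second.  If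
   s > d then (zeta)_(s-1) vanishes at every d-th root of unity, which matches the convention
   sigma_d(t;s) = 0. *)

Lemma divisors_gt0 n d : d \in divisors n -> (0 < d)%N.
Proof.
have [->|n_gt0] := posnP n; first by rewrite inE => /eqP ->.
by rewrite -dvdn_divisors // => /dvdn_gt0; apply.
Qed.

Lemma big_divisors_dvd (R : nmodType) (F : nat -> R) m n :
  (0 < n)%N -> (m %| n)%N ->
  \sum_(d <- divisors n | (d %| m)%N) F d = \sum_(d <- divisors m) F d.
Proof.
move=> n_gt0 mn; have m_gt0 : (0 < m)%N by apply: dvdn_gt0 mn.
rewrite -big_filter; apply/perm_big/uniq_perm; rewrite ?filter_uniq ?divisors_uniq //.
move=> d; rewrite mem_filter -!dvdn_divisors //.
by apply/andP/idP => [[]//|dm]; split=> //; apply: dvdn_trans mn.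
Qed.

Lemma big_divisors_mul (R : nmodType) (F : nat -> R) p n :
  (0 < p)%N -> (0 < n)%N -> (p %| n)%N ->
  \sum_(d <- divisors n | (p %| d)%N) F d = \sum_(e <- divisors (n %/ p)) F (p * e)%N.
Proof.
move=> p_gt0 n_gt0 pn.
have np_gt0 : (0 < n %/ p)%N by rewrite divn_gt0 // dvdn_leq.
rewrite -big_filter -(big_map (muln p) xpredT).
apply/perm_big/uniq_perm; rewrite ?filter_uniq ?divisors_uniq //.
  by rewrite map_inj_uniq ?divisors_uniq // => a b /eqP; rewrite eqn_pmul2l // => /eqP.
move=> d; rewrite mem_filter -dvdn_divisors //.
apply/andP/mapP => [[pd dn]|[e]].
  exists (d %/ p)%N; last by rewrite mulnC divnK.
  by rewrite -dvdn_divisors // dvdn_divRL // divnK.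
by rewrite -dvdn_divisors // dvdn_divRL // => en ->; rewrite dvdn_mulr // mulnC.
Qed.

Lemma big_divisors_ndvd (R : nmodType) (F : nat -> R) p n :
  prime p -> (0 < n)%N -> (p %| n)%N ->
  \sum_(d <- divisors n | ~~ (p %| d)%N) F d =
  \sum_(d <- divisors (n %/ p) | ~~ (p %| d)%N) F d.
Proof.
move=> p_pr n_gt0 pn; have p_gt0 := prime_gt0 p_pr.
have np_gt0 : (0 < n %/ p)%N by rewrite divn_gt0 // dvdn_leq.
rewrite -[LHS]big_filter -[RHS]big_filter.
apply/perm_big/uniq_perm; rewrite ?filter_uniq ?divisors_uniq //.
move=> d; rewrite !mem_filter -!dvdn_divisors //.
case: (boolP (p %| d)%N) => //= npd.
by rewrite -{1}(divnK pn) Gauss_dvdl // coprime_sym prime_coprime.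
Qed.

Lemma divn_divK m d : (0 < m)%N -> (d %| m)%N -> (m %/ (m %/ d))%N = d.
Proof. by move=> m_gt0 dm; rewrite divnA // mulKn. Qed.

Lemma perm_divisors_flip n : (0 < n)%N -> perm_eq [seq n %/ d | d <- divisors n]%N (divisors n).
Proof.
move=> n_gt0; have flipK := divn_divK n_gt0.
apply: uniq_perm; rewrite ?divisors_uniq //.
  rewrite map_inj_in_uniq ?divisors_uniq // => a b.
  by rewrite -!dvdn_divisors // => an bn eq_ab; rewrite -(flipK a) // eq_ab flipK.
move=> d; apply/mapP/idP => [[e]|dn].
  by rewrite -!dvdn_divisors // => en ->; apply: dvdn_div.
by exists (n %/ d)%N; rewrite -?dvdn_divisors ?dvdn_div ?flipK // dvdn_divisors.
Qed.

Lemma moebius_sqr p m : prime p -> (0 < m)%N -> (p ^ 2 %| m)%N -> moebius m = 0.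
Proof.
move=> p_pr m_gt0 p2m; rewrite /moebius (gtn_eqF m_gt0).
have pm : (p %| m)%N by apply: dvdn_trans p2m; rewrite dvdn_exp.
case: ifP => // /allP /(_ p); rewrite mem_primes p_pr m_gt0 pm => /(_ isT) /eqP.
by move: p2m; rewrite (pfactor_dvdn 2 p_pr m_gt0) => /[swap] ->.
Qed.

Lemma moebiusMprime p m : prime p -> (0 < m)%N -> ~~ (p %| m)%N ->
  moebius (p * m) = - moebius m.
Proof.
move=> p_pr m_gt0 npm; have p_gt0 := prime_gt0 p_pr.
have primesM : perm_eq (primes (p * m)) (p :: primes m).
  apply: uniq_perm; rewrite /= ?primes_uniq ?mem_primes ?(negbTE npm) ?andbF //.
  move=> q; rewrite in_cons !mem_primes muln_gt0 p_gt0 m_gt0 /=.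
  have [q_pr|] := boolP (prime q); last by case: eqP => // ->; rewrite p_pr.
  by rewrite Euclid_dvdM // dvdn_prime2.
have lognMq q : q \in primes m -> logn q (p * m) = logn q m.
  rewrite mem_primes => /and3P[q_pr _ qm]; rewrite lognM // logn_prime //.
  by case: eqP => [eq_qp|]; [rewrite -eq_qp qm in npm | rewrite add0n].
have lognMp : logn p (p * m) = 1%N.
  by rewrite lognM // logn_prime // eqxx logn_coprime // prime_coprime.
rewrite /moebius muln_eq0 (gtn_eqF p_gt0) (gtn_eqF m_gt0) /=.
rewrite (perm_all _ primesM) (perm_size primesM) /= lognMp eqxx /=.
rewrite (eq_in_all (a2 := fun q => logn q m == 1%N)); last by move=> q /lognMq ->.
by case: ifP; rewrite ?exprS ?mulN1r ?oppr0.
Qed.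

Lemma sum_moebius_divisors n : (0 < n)%N ->
  \sum_(d <- divisors n) moebius d = (n == 1)%:R.
Proof.
move=> n_gt0; have [n_le1|n1] := leqP n 1.
  have -> : n = 1%N by apply/eqP; rewrite eqn_leq n_le1.
  by rewrite (_ : divisors 1 = [:: 1]) // big_seq1.
set p := pdiv n; have p_pr : prime p by apply: pdiv_prime.
have pn : (p %| n)%N by apply: pdiv_dvd.
have p_gt0 := prime_gt0 p_pr.
have np_gt0 : (0 < n %/ p)%N by rewrite divn_gt0 // dvdn_leq.
rewrite (bigID (fun d => p %| d)%N) /= big_divisors_mul // big_divisors_ndvd //.
rewrite (bigID (fun d => p %| d)%N) /= big1_seq => [|e /andP[pe /divisors_gt0 e_gt0]].
  rewrite add0r -big_split /= big1_seq ?(gtn_eqF n1) // => e /andP[pe /divisors_gt0].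
  by move=> e_gt0; rewrite moebiusMprime // addNr.
by apply: (moebius_sqr p_pr); rewrite ?muln_gt0 ?p_gt0 // expnS expn1 dvdn_pmul2l.
Qed.

Lemma moebius_inversion (R : pzRingType) (f g : nat -> R) n : (0 < n)%N ->
  (forall d, (d %| n)%N -> g d = \sum_(e <- divisors d) f e) ->
  \sum_(d <- divisors n) (moebius (n %/ d))%:~R * g d = f n.
Proof.
move=> n_gt0 gE.
(* sum_d mu(n/d) g(d) = sum_c mu(c) sum_(e | n/c) f(e) = sum_(e | n) f(e) sum_(c | n/e) mu(c) *)
rewrite -(perm_big _ (perm_divisors_flip n_gt0)) big_map /=.
under eq_big_seq => c cn.
  have {}cn : (c %| n)%N by rewrite dvdn_divisors.
  rewrite divn_divK // gE ?dvdn_div // -(big_divisors_dvd f n_gt0) ?dvdn_div //.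
  rewrite big_mkcond mulr_sumr.
  over.
have inner e : (e %| n)%N ->
    \sum_(c <- divisors n) (moebius c)%:~R * (if (e %| n %/ c)%N then f e else 0)
    = (n %/ e == 1)%N%:R * f e.
  move=> en.
  transitivity (\sum_(c <- divisors n | (c %| n %/ e)%N) (moebius c)%:~R * f e).
    rewrite [RHS]big_mkcond; apply: eq_big_seq => c; rewrite -dvdn_divisors // => cn.
    by rewrite !dvdn_divRL // [(e * c)%N]mulnC; case: ifP; rewrite ?mulr0.
  rewrite -mulr_suml big_divisors_dvd ?dvdn_div // -rmorph_sum.
  have ne_gt0 : (0 < n %/ e)%N by rewrite divn_gt0 ?(dvdn_gt0 n_gt0 en) // dvdn_leq.
  by rewrite sum_moebius_divisors // rmorph_nat.
rewrite exchange_big /= (eq_big_seq (fun e => (n %/ e == 1)%N%:R * f e)); last first.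
  by move=> e; rewrite -dvdn_divisors // => /inner.
rewrite (bigD1_seq n) ?divisors_id ?divisors_uniq //= divnn n_gt0 eqxx mul1r.
rewrite big1_seq ?addr0 // => e /andP[ne]; rewrite -dvdn_divisors // => en.
case: eqP => [e_n|]; last by rewrite mul0r.
by move: ne; rewrite -{1}(divnK en) e_n mul1n eqxx.
Qed.

Lemma big_gcd_eq (R : nmodType) (F : nat -> R) n g : (0 < n)%N -> (g %| n)%N ->
  \sum_(i < n | gcdn i n == g) F i = \sum_(j < n %/ g | coprime j (n %/ g)) F (g * j)%N.
Proof.
move=> n_gt0 gn; have g_gt0 : (0 < g)%N by apply: dvdn_gt0 gn.
have n_eq : n = (g * (n %/ g))%N by rewrite mulnC divnK.
rewrite -(big_mkord (fun i => gcdn i n == g)).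
rewrite -(big_mkord (fun j => coprime j (n %/ g)) (fun j => F (g * j)%N)).
rewrite -big_filter -[RHS]big_filter -(big_map (muln g) xpredT).
apply/perm_big/uniq_perm.
- by rewrite filter_uniq ?iota_uniq.
- rewrite map_inj_uniq ?filter_uniq ?iota_uniq // => a b /eqP.
  by rewrite eqn_pmul2l // => /eqP.
move=> i; rewrite mem_filter mem_iota /= subn0.
apply/andP/mapP => [[/eqP gcd_i i_lt]|[j]].
  have gi : (g %| i)%N by rewrite -gcd_i dvdn_gcdl.
  exists (i %/ g)%N; last by rewrite mulnC divnK.
  rewrite mem_filter mem_iota /= subn0 ltn_divLR // mulnC -n_eq i_lt andbT.
  by rewrite /coprime -(eqn_pmul2l g_gt0) muln_gcdr -n_eq mulnC divnK // gcd_i muln1.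
rewrite mem_filter mem_iota /= subn0 => /andP[co_j j_lt] ->.
rewrite add0n in j_lt; split; last by rewrite [X in (_ < X)%N]n_eq ltn_pmul2l.
by rewrite [in gcdn _ n]n_eq -muln_gcdr (eqP co_j) muln1.
Qed.

Lemma big_ord_divisors_coprime (R : nmodType) (F : nat -> R) n : (0 < n)%N ->
  \sum_(i < n) F i = \sum_(d <- divisors n) \sum_(j < d | coprime j d) F (n %/ d * j)%N.
Proof.
move=> n_gt0.
transitivity (\sum_(g <- divisors n) \sum_(i < n | gcdn i n == g) F i).
  under [RHS]eq_bigr do rewrite big_mkcond.
  rewrite exchange_big; apply: eq_bigr => i _.
  have gcd_in : gcdn i n \in divisors n by rewrite -dvdn_divisors // dvdn_gcdr.
  rewrite (bigD1_seq _ gcd_in) ?divisors_uniq //= eqxx big1 ?addr0 // => g ne_g.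
  by rewrite eq_sym (negbTE ne_g).
rewrite -(perm_big _ (perm_divisors_flip n_gt0)) big_map; apply: eq_big_seq => d.
by rewrite -dvdn_divisors // => dn; rewrite big_gcd_eq ?dvdn_div // divn_divK.
Qed.

Lemma size_1subXn (R : nzRingType) n : (0 < n)%N -> size (1 - 'X^n : {poly R}) = n.+1.
Proof. by move=> n_gt0; rewrite -opprB size_polyN size_XnsubC. Qed.

Lemma absz_modz_lt (t : int) n : (0 < n)%N -> (`|(t %% n%:Z)%Z| < n)%N.
Proof.
move=> n_gt0; have n_neq0 : n%:Z != 0 by rewrite eqz_nat -lt0n.
by rewrite -ltz_nat gez0_abs ?modz_ge0 ?ltz_mod.
Qed.

Lemma exprNz_unity (F : fieldType) n (x : F) (t : int) : (0 < n)%N -> x ^+ n = 1 ->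
  x ^ (- t) = x ^+ (n - `|(t %% n%:Z)%Z|%N).
Proof.
move=> n_gt0 xn; have x_neq0 : x != 0.
  by apply: contra_eq_neq xn => ->; rewrite expr0n gtn_eqF // eq_sym oner_eq0.
set r := `|(t %% n%:Z)%Z|%N; have r_lt : (r < n)%N by apply: absz_modz_lt.
have xt : x ^ t = x ^+ r.
  rewrite {1}(divz_eq t n%:Z) mulrC expfzDr // -exprz_exp -exprnP xn exp1rz mul1r.
  by rewrite exprnP /r gez0_abs ?modz_ge0 // eqz_nat -lt0n.
rewrite -invr_expz xt; apply: (mulIf (expf_neq0 r x_neq0)).
by rewrite mulVf ?expf_neq0 // -exprD subnK ?xn // ltnW.
Qed.

Section DiscreteFourier.
Variables (F : fieldType) (n : nat) (z : F).
Hypothesis prim_z : n.-primitive_root z.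
Let n_gt0 := prim_order_gt0 prim_z.

Lemma sum_expr_prim_root m :
  \sum_(i < n) (z ^+ m) ^+ i = if (n %| m)%N then n%:R else 0.
Proof.
rewrite (prim_order_dvd prim_z); have [->|zm_neq1] := eqVneq.
  by under eq_bigr do rewrite expr1n; rewrite sumr_const card_ord.
have zm1_neq0 : z ^+ m - 1 != 0 by rewrite subr_eq0.
apply/eqP; rewrite -(mulrI_eq0 _ (mulfI zm1_neq0)) -subrX1.
by rewrite exprAC (prim_expr_order prim_z) expr1n subrr.
Qed.

Lemma coef_modp_1subXn (P : {poly F}) (t : int) :
  n%:R * (P %% (1 - 'X^n))`_`|(t %% n%:Z)%Z|%N
    = \sum_(i < n) (z ^+ i) ^ (- t) * P.[z ^+ i].
Proof.
(* Only the remainder survives evaluation at the n-th roots of unity, and orthogonality of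
   the characters i |-> z^(i j) isolates its r-th coefficient. *)
set Q := 1 - 'X^n; set R := P %% Q; set r := `|(t %% n%:Z)%Z|%N.
have r_lt : (r < n)%N by apply: absz_modz_lt.
have zi_unity i : (z ^+ i) ^+ n = 1 by rewrite exprAC (prim_expr_order prim_z) expr1n.
have size_R : (size R <= n)%N.
  by rewrite -ltnS -(size_1subXn F n_gt0) ltn_modp -size_poly_eq0 size_1subXn.
have term i : (z ^+ i) ^ (- t) * P.[z ^+ i]
    = \sum_(j < n) R`_j * (z ^+ (j + (n - r))) ^+ i.
  rewrite (exprNz_unity _ n_gt0 (zi_unity i)) {1}(divp_eq P Q) hornerD hornerM /Q.
  rewrite !hornerE zi_unity subrr mulr0 add0r (horner_coef_wide _ size_R) mulr_sumr.
  by apply: eq_bigr => j _; rewrite mulrCA -exprD -!exprM addnC mulnC.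
under eq_bigr do rewrite term.
rewrite exchange_big /=; under eq_bigr do rewrite -mulr_sumr sum_expr_prim_root.
rewrite (bigD1 (Ordinal r_lt)) //= (subnKC (ltnW r_lt)) dvdnn mulrC big1 ?addr0 // => j.
rewrite -val_eqE /= => j_neq_r; case: ifP => [/dvdnP[q]|]; last by rewrite mulr0.
have := ltn_ord j; case: q => [|[|q]]; lia.
Qed.

End DiscreteFourier.

Lemma horner_map_qpoch (R : comNzRingType) (f : {rmorphism rat -> R}) m x :
  (map_poly f (qpoch m)).[x] = \prod_(1 <= j < m.+1) (1 - x ^+ j).
Proof.
rewrite rmorph_prod horner_prod; apply: eq_bigr => j _.
by rewrite rmorphB rmorph1 rmorphXn /= map_polyX !hornerE.
Qed.

Lemma prod_1subX_unity (R : comNzRingType) m e (x : R) : (0 < e < m)%N -> x ^+ e = 1 ->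
  \prod_(1 <= j < m) (1 - x ^+ j) = 0.
Proof.
move=> /andP[e_gt0 e_lt] xe; rewrite (bigD1_seq e) ?mem_index_iota ?e_gt0 ?iota_uniq //=.
by rewrite xe subrr mul0r.
Qed.

Lemma prod_1subX_prim_root (F : fieldType) d (y : F) : d.-primitive_root y ->
  \prod_(1 <= j < d) (1 - y ^+ j) = d%:R.
Proof.
move=> prim_y; have d_gt0 := prim_order_gt0 prim_y.
have := factor_Xn_sub_1 prim_y; rewrite big_ltn // expr0 subrX1 -[in X in _ = X]polyC1.
move/(mulfI (negbT (polyXsubC_eq0 1)))/(congr1 (horner^~ 1)) => /= prod_eq.
transitivity (\prod_(1 <= j < d) ('X - (y ^+ j)%:P)).[1].
  by rewrite horner_prod; apply: eq_bigr => j _; rewrite hornerXsubC.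
rewrite prod_eq horner_sum; under eq_bigr do rewrite hornerXn expr1n.
by rewrite sumr_const card_ord.
Qed.

Lemma prod_1subX_prim_root_exp (F : fieldType) d (w : F) j : d.-primitive_root w ->
  \prod_(1 <= m < d) (1 - (w ^+ j) ^+ m) = if coprime j d then d%:R else 0.
Proof.
move=> prim_w; have d_gt0 := prim_order_gt0 prim_w.
case: ifP => [co_jd|not_co_jd].
  by rewrite prod_1subX_prim_root // prim_root_exp_coprime.
set g := gcdn j d; have g_dvd_d : (g %| d)%N by apply: dvdn_gcdr.
have g_gt1 : (1 < g)%N.
  by move: not_co_jd; rewrite /coprime -/g ltn_neqAle eq_sym => ->; rewrite gcdn_gt0 d_gt0 orbT.
have e_bounds : (0 < d %/ g < d)%N.
  by rewrite divn_gt0 ?(ltnW g_gt1) // dvdn_leq //= ltn_Pdiv.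
apply: (prod_1subX_unity e_bounds).
rewrite -exprM muln_divA // -divn_mulAC ?dvdn_gcdl // mulnC exprM.
by rewrite (prim_expr_order prim_w) expr1n.
Qed.

Lemma ratr_coef_modp_1subXn (P : {poly rat}) d (w : algC) (t : int) :
  d.-primitive_root w ->
  d%:R * ratr ((P %% (1 - 'X^d))`_`|(t %% d%:Z)%Z|%N)
    = \sum_(i < d) (w ^+ i) ^ (- t) * (map_poly ratr P).[w ^+ i].
Proof.
move=> prim_w; rewrite -coef_map map_modp rmorphB rmorph1 rmorphXn /= map_polyX.
exact: coef_modp_1subXn.
Qed.

Section SigmaRootSums.
Variables (s : nat) (t : int).

Definition twisted_qpoch (x : algC) : algC := x ^ (- t) * (map_poly ratr (qpoch s.-1)).[x].

Variables (d : nat) (w : algC).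
Hypothesis prim_w : d.-primitive_root w.

Lemma ratr_sigma0 : ratr (d%:R * sigma 0 d t s) = \sum_(i < d) twisted_qpoch (w ^+ i).
Proof.
rewrite /sigma /Rrem expr0 invr1 scale1r mul1r rmorphM rmorph_nat.
exact: ratr_coef_modp_1subXn.
Qed.

Lemma twisted_qpoch_eq0 i : (d < s)%N -> twisted_qpoch (w ^+ i) = 0.
Proof.
move=> d_lt_s; have d_gt0 := prim_order_gt0 prim_w.
rewrite /twisted_qpoch horner_map_qpoch (@prod_1subX_unity _ _ d) ?mulr0 //.
  by rewrite d_gt0 /=; case: s d_lt_s.
by rewrite exprAC (prim_expr_order prim_w) expr1n.
Qed.

Lemma ratr_sigmac0 : ratr (d%:R * sigmac 0 d t s) = \sum_(i < d) twisted_qpoch (w ^+ i).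
Proof.
rewrite /sigmac; case: leqP => [_|d_lt_s]; first exact: ratr_sigma0.
by rewrite mulr0 rmorph0 big1 // => i _; rewrite twisted_qpoch_eq0.
Qed.

Lemma ratr_sigmac1 :
  ratr (d%:R * sigmac 1 d t s) = \sum_(i < d | coprime i d) twisted_qpoch (w ^+ i).
Proof.
have d_gt0 := prim_order_gt0 prim_w; rewrite /sigmac; case: leqP => [_|d_lt_s]; last first.
  by rewrite mulr0 rmorph0 big1 // => i _; rewrite twisted_qpoch_eq0.
rewrite /sigma /Rrem !expr1 modpZl coefZ mulrA mulfV ?mul1r ?pnatr_eq0 -?lt0n //.
have d_neq0 : (d%:R : algC) != 0 by rewrite pnatr_eq0 -lt0n.
apply: (mulfI d_neq0); rewrite (ratr_coef_modp_1subXn _ t prim_w) mulr_sumr [RHS]big_mkcond.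
apply: eq_bigr => i _; rewrite rmorphM hornerM horner_map_qpoch prednK //.
rewrite prod_1subX_prim_root_exp //; case: ifP => _; last by rewrite mul0r mulr0.
by rewrite /twisted_qpoch mulrCA.
Qed.
End SigmaRootSums.

Theorem proposition2p11 (k s : nat) (t : int) :
  (1 <= s)%N -> (s <= k)%N ->
  k%:R * sigma 0 k t s = \sum_(d <- divisors k) d%:R * sigmac 1 d t s /\
  k%:R * sigma 1 k t s
    = \sum_(d <- divisors k) (moebius (k %/ d))%:~R * d%:R * sigmac 0 d t s.
Proof.
move=> s_gt0 s_le_k; have k_gt0 : (0 < k)%N by apply: leq_trans s_le_k.
have sigmacE b : sigmac b k t s = sigma b k t s by rewrite /sigmac s_le_k.
have [z prim_z] := C_prim_root_exists k_gt0.
have prim_zk := dvdn_prim_root prim_z.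
pose B d := \sum_(j < d | coprime j d) twisted_qpoch s t ((z ^+ (k %/ d)) ^+ j).
have ratr_sigmac1_B d : (d %| k)%N -> ratr (d%:R * sigmac 1 d t s) = B d.
  by move/prim_zk/ratr_sigmac1.
have ratr_sigmac0_B d : (d %| k)%N -> ratr (d%:R * sigmac 0 d t s) = \sum_(e <- divisors d) B e.
  move=> dk; have d_gt0 := dvdn_gt0 k_gt0 dk.
  rewrite (ratr_sigmac0 _ _ (prim_zk d dk)).
  rewrite (big_ord_divisors_coprime (fun i => twisted_qpoch s t (z ^+ (k %/ d) ^+ i)) d_gt0).
  apply: eq_big_seq => e; rewrite -dvdn_divisors // => ed; apply: eq_bigr => j _.
  by rewrite -!exprM mulnA muln_divA // divnK.
have ratr_inj : injective (ratr : rat -> algC) by apply: fmorph_inj.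
split; apply: ratr_inj; rewrite -sigmacE.
  rewrite ratr_sigmac0_B // rmorph_sum; apply: eq_big_seq => e.
  by rewrite -dvdn_divisors // => /ratr_sigmac1_B.
rewrite ratr_sigmac1_B // -(moebius_inversion k_gt0 ratr_sigmac0_B) rmorph_sum.
by apply: eq_bigr => d _; rewrite -mulrA [RHS]rmorphM rmorph_int.
Qed.
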